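(* Let $V$ be a quasi-regular mixed lattice vector space and $A$ a mixed lattice subspace of $V$. Then the left disjoint complement ${}^{\perp}A$ is a regular specific band in $V$. Moreover, if ${}^{\perp}A$ is an ideal, then it is a regular band.
   Context: A mixed lattice vector space is a real vector space $V$ with two partial orderings $\le$ (initial) and $\preceq$ (specific), each compatible with the vector space structure, such that for all $x,y$ the mixed lower envelope $x\curlywedge y=\max\{w: w\preceq x,\ w\le y\}$ and mixed upper envelope $x\curlyvee y=\min\{w: x\preceq w,\ y\le w\}$ exist (max/min with respect to $\le$). $V_p=\{x:0\le x\}$, $V_{sp}=\{x:0\preceq x\}$, $E_p=E\cap V_p$, $E_{sp}=E\cap V_{sp}$. $V$ is quasi-regular if $V_{sp}$ is closed under $\curlywedge,\curlyvee$. A mixed lattice subspace is a linear subspace closed under $\curlywedge,\curlyvee$; it is regular if $S=S_{sp}-S_{sp}$. An ideal (resp. specific ideal) is a mixed lattice subspace that is $(\le)$-order convex (resp. $(\preceq)$-order convex), where $U$ is $(\le)$-order convex if $x\le z\le y$, $x,y\in U$ imply $z\in U$, and analogously for $\preceq$. A set $E$ is $(\le)$-order closed if $\sup C\in E$ for every nonempty $(\le)$-upwards-directed $C\subseteq E$ whose $\le$-supremum exists in $V$, and $\inf C\in E$ for every nonempty $(\le)$-downwards-directed $C\subseteq E$ whose $\le$-infimum exists in $V$; $(\preceq)$-order closed is defined the same way using $\preceq$-directedness and $\preceq$-suprema/infima. A band is a $(\le)$-order closed ideal; a specific band is a $(\preceq)$-order closed specific ideal. The left disjoint complement ${}^{\perp}A$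 of a mixed lattice subspace $A$ is the smallest specific ideal containing the set $\{x\in V_{sp}: x\curlywedge z=0 \text{ for all } z\in A_p\}$. *)

From mathcomp Require Import all_boot all_order all_algebra.
From mathcomp Require Import reals.
Set Implicit Arguments. Unset Strict Implicit. Unset Printing Implicit Defensive.
Import Order.TTheory GRing.Theory Num.Theory.
Local Open Scope ring_scope.

(* Subsets of V are predicates V -> Prop. le is the initial order <=,
   sle is the specific order \preceq. *)
Section MixedLattice.
Variables (R : realType) (V : lmodType R).
Variables (le sle : V -> V -> Prop).

Definition partial_order (r : V -> V -> Prop) : Prop :=
  [/\ forall x, r x x,
      forall x y, r x y -> r y x -> x = y &
      forall x y z, r x y -> r y z -> r x z].

Definition vs_compatible (r : V -> V -> Prop) : Prop :=
  (forall x y z, r x y -> r (x + z) (y + z)) /\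
  (forall (a : R) x y, 0 <= a -> r x y -> r (a *: x) (a *: y)).

(* w = x \curlywedge y = max_{<=} { w : w \preceq x, w <= y } *)
Definition is_mlow (x y w : V) : Prop :=
  sle w x /\ le w y /\ (forall u, sle u x -> le u y -> le u w).

(* w = x \curlyvee y = min_{<=} { w : x \preceq w, y <= w } *)
Definition is_mupp (x y w : V) : Prop :=
  sle x w /\ le y w /\ (forall u, sle x u -> le y u -> le w u).

Definition mixed_lattice_vs : Prop :=
  [/\ partial_order le, partial_order sle, vs_compatible le & vs_compatible sle] /\
  (forall x y, exists w, is_mlow x y w) /\
  (forall x y, exists w, is_mupp x y w).

Definition Vp (x : V) : Prop := le 0 x.
Definition Vsp (x : V) : Prop := sle 0 x.

Definition envelope_closed (E : V -> Prop) : Prop :=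
  (forall x y w, E x -> E y -> is_mlow x y w -> E w) /\
  (forall x y w, E x -> E y -> is_mupp x y w -> E w).

Definition quasi_regular : Prop := envelope_closed Vsp.

Definition linear_subspace (S : V -> Prop) : Prop :=
  [/\ S 0, (forall x y, S x -> S y -> S (x + y)) &
      (forall (a : R) x, S x -> S (a *: x))].

Definition mixed_lattice_subspace (S : V -> Prop) : Prop :=
  linear_subspace S /\ envelope_closed S.

Definition regular_subspace (S : V -> Prop) : Prop :=
  mixed_lattice_subspace S /\
  (forall x, S x -> exists u v, [/\ S u, Vsp u, S v, Vsp v & x = u - v]).

Definition order_convex (r : V -> V -> Prop) (U : V -> Prop) : Prop :=
  forall x y z, U x -> U y -> r x z -> r z y -> U z.

Definition ideal (U : V -> Prop) : Prop :=
  mixed_lattice_subspace U /\ order_convex le U.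

Definition specific_ideal (U : V -> Prop) : Prop :=
  mixed_lattice_subspace U /\ order_convex sle U.

Definition up_directed (r : V -> V -> Prop) (C : V -> Prop) : Prop :=
  forall x y, C x -> C y -> exists z, [/\ C z, r x z & r y z].

Definition down_directed (r : V -> V -> Prop) (C : V -> Prop) : Prop :=
  forall x y, C x -> C y -> exists z, [/\ C z, r z x & r z y].

Definition is_sup (r : V -> V -> Prop) (C : V -> Prop) (s : V) : Prop :=
  (forall x, C x -> r x s) /\ (forall u, (forall x, C x -> r x u) -> r s u).

Definition is_inf (r : V -> V -> Prop) (C : V -> Prop) (s : V) : Prop :=
  (forall x, C x -> r s x) /\ (forall u, (forall x, C x -> r u x) -> r u s).

Definition order_closed (r : V -> V -> Prop) (E : V -> Prop) : Prop :=
  (forall C s, (forall x, C x -> E x) -> (exists x, C x) ->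
     up_directed r C -> is_sup r C s -> E s) /\
  (forall C s, (forall x, C x -> E x) -> (exists x, C x) ->
     down_directed r C -> is_inf r C s -> E s).

Definition band (U : V -> Prop) : Prop := ideal U /\ order_closed le U.
Definition specific_band (U : V -> Prop) : Prop :=
  specific_ideal U /\ order_closed sle U.

Definition left_disj_gen (A : V -> Prop) (x : V) : Prop :=
  Vsp x /\ (forall z, A z -> Vp z -> is_mlow x z 0).

Definition left_disj_compl (A : V -> Prop) (x : V) : Prop :=
  forall I, specific_ideal I -> (forall y, left_disj_gen A y -> I y) -> I x.

End MixedLattice.

From mathcomp Require Import all_boot all_order all_algebra.
From mathcomp Require Import reals.
From mathcomp Require Import boolp.
Set Implicit Arguments. Unset Strict Implicit. Unset Printing Implicit Defensive.
Import Order.TTheory GRing.Theory Num.Theory.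
Local Open Scope ring_scope.

(* Let G = {x : 0 ⪯ x, x ⋏ z = 0 for all z in A_p} be the generating set of
   the left disjoint complement. Quasi-regularity makes ⪯ finer than ≤ and
   yields the estimate a - a ⋏ b ⪯ g whenever 0 ⪯ g and a - b ⪯ g. With it, G
   is a ⪯-hereditary convex cone, closed under ⪯-suprema of nonempty subsets,
   and the ⪯-interval [0, b] lies in G for every b in G - G. Hence G - G is a
   specific ideal, so it is the left disjoint complement, and G - G is
   ⪯-order closed: shifting a directed family by one of its members moves it
   into G. If G - G is moreover ≤-convex, the ≤-supremum s of a family in it
   lies between a member and 0 ⋎ s, which belongs to G. *)

Section CompatibleOrder.
Variables (R : realType) (V : lmodType R) (r : V -> V -> Prop).

Definition compatible_order := partial_order r /\ vs_compatible r.

Hypothesis hr : compatible_order.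

Lemma ord_refl x : r x x.
Proof. by case: hr => [[]]. Qed.

Lemma ord_anti x y : r x y -> r y x -> x = y.
Proof. by case: hr => [[_ h _] _]; apply: h. Qed.

Lemma ord_trans y x z : r x y -> r y z -> r x z.
Proof. by case: hr => [[_ _ h] _]; apply: h. Qed.

Lemma ordDr z x y : r x y -> r (x + z) (y + z).
Proof. by case: hr => _ [h _]; apply: h. Qed.

Lemma ordZ a x y : 0 <= a -> r x y -> r (a *: x) (a *: y).
Proof. by case: hr => _ [_ h]; apply: h. Qed.

Lemma ord_subr_ge0 x y : r 0 (y - x) <-> r x y.
Proof.
split=> h; first by have := ordDr x h; rewrite add0r addrNK.
by have := ordDr (- x) h; rewrite subrr.
Qed.

Lemma ord_addr_ge0 a b : r 0 a -> r 0 b -> r 0 (a + b).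
Proof. by move=> ha hb; apply: (ord_trans ha _); have := ordDr a hb; rewrite add0r addrC. Qed.

Lemma ordN x y : r x y -> r (- y) (- x).
Proof. by move/ord_subr_ge0 => h; apply/ord_subr_ge0; rewrite opprK addrC. Qed.

Lemma ordBl x y z : r y z -> r (x - z) (x - y).
Proof. by move/ordN/(ordDr x); rewrite ![_ + x]addrC. Qed.

Lemma order_closed_from_sup (E : V -> Prop) :
  (forall x, E x -> E (- x)) ->
  (forall C s, (forall x, C x -> E x) -> (exists x, C x) ->
     up_directed r C -> is_sup r C s -> E s) ->
  order_closed r E.
Proof.
move=> EN Esup; split; first exact: Esup.
move=> C s hCE [x0 hx0] hdir [hlb hgreatest].
rewrite -[s]opprK; apply: (EN); apply: (Esup (fun x => C (- x))).
- by move=> x /hCE /EN; rewrite opprK.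
- by exists (- x0); rewrite opprK.
- move=> x y hx hy; have [z [hz hzx hzy]] := hdir _ _ hx hy.
  exists (- z); split; first by rewrite opprK.
    by rewrite -[x]opprK; apply: ordN.
  by rewrite -[y]opprK; apply: ordN.
- split=> [x /hlb /ordN|u hu]; first by rewrite opprK.
  rewrite -[u]opprK; apply: ordN; apply: hgreatest => x hx.
  by rewrite -[x]opprK; apply: ordN; apply: hu; rewrite opprK.
Qed.

Lemma is_sup_shift_tail C c0 s : C c0 -> up_directed r C -> is_sup r C s ->
  is_sup r (fun x => exists c, [/\ C c, r c0 c & x = c - c0]) (s - c0).
Proof.
move=> hc0 hdir [hub hleast]; split=> [_ [c [hc _ ->]]|u hu].
  exact/ordDr/hub.
suff /(ordDr (- c0)) : r s (u + c0) by rewrite addrK.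
apply: hleast => c hc; have [d [hd hcd hc0d]] := hdir _ _ hc hc0.
apply: (ord_trans hcd _).
have /(ordDr c0) : r (d - c0) u by apply: hu; exists d.
by rewrite addrNK.
Qed.

End CompatibleOrder.

Section ConeDifference.
Variables (R : realType) (V : lmodType R) (G : V -> Prop).

Definition cone_diff x := exists u v, [/\ G u, G v & x = u - v].

Lemma cone_diffN x : cone_diff x -> cone_diff (- x).
Proof. by case=> [u [v [hu hv ->]]]; exists v, u; rewrite opprB. Qed.

Lemma cone_diff_min (S : V -> Prop) :
  linear_subspace S -> (forall x, G x -> S x) -> forall x, cone_diff x -> S x.
Proof.
case=> _ SD SZ GS _ [u [v [/GS Su /GS Sv ->]]].
by have := SD _ _ Su (SZ (-1) _ Sv); rewrite scaleN1r.
Qed.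

Hypothesis G0 : G 0.
Hypothesis GD : forall x y, G x -> G y -> G (x + y).
Hypothesis GZ : forall (a : R) x, 0 <= a -> G x -> G (a *: x).

Lemma cone_diff_of x : G x -> cone_diff x.
Proof. by move=> hx; exists x, 0; rewrite subr0. Qed.

Lemma cone_diffD x y : cone_diff x -> cone_diff y -> cone_diff (x + y).
Proof.
case=> [u1 [v1 [hu1 hv1 ->]]] [u2 [v2 [hu2 hv2 ->]]].
exists (u1 + u2), (v1 + v2).
by split; [exact: GD | exact: GD | rewrite opprD addrACA].
Qed.

Lemma cone_diffB x y : cone_diff x -> cone_diff y -> cone_diff (x - y).
Proof. by move=> hx /cone_diffN; apply: cone_diffD. Qed.

Lemma cone_diff_subspace : linear_subspace cone_diff.
Proof.
split; [exact: cone_diff_of | exact: cone_diffD |].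
move=> a _ [u [v [hu hv ->]]]; rewrite scalerBr.
have [ha|ha] := leP 0 a.
  by exists (a *: u), (a *: v); split=> //; apply: GZ.
have ha' : 0 <= - a by rewrite oppr_ge0 ltW.
exists ((- a) *: v), ((- a) *: u).
by split; [exact: GZ | exact: GZ | rewrite !scaleNr opprK addrC].
Qed.

End ConeDifference.

Section LeftDisjointComplement.
Variables (R : realType) (V : lmodType R) (le sle : V -> V -> Prop).
Hypothesis HV : mixed_lattice_vs le sle.

Local Notation mlow := (is_mlow le sle).
Local Notation mupp := (is_mupp le sle).

Lemma le_order : compatible_order le.
Proof. by case: HV => [[? _ ? _] _]; split. Qed.

Lemma sle_order : compatible_order sle.
Proof. by case: HV => [[_ ? _ ?] _]; split. Qed.

Lemma mlow_exists x y : exists w, mlow x y w.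
Proof. by case: HV => _ []. Qed.

Lemma mupp_exists x y : exists w, mupp x y w.
Proof. by case: HV => _ [_]. Qed.

Lemma mlowDr t x y w : mlow x y w -> mlow (x + t) (y + t) (w + t).
Proof.
case=> hwx [hwy hmax]; split; first exact: (ordDr sle_order t hwx).
split; first exact: (ordDr le_order t hwy).
move=> u hux huy; have /(ordDr le_order t) : le (u - t) w.
  apply: hmax; first by have := ordDr sle_order (- t) hux; rewrite addrK.
  by have := ordDr le_order (- t) huy; rewrite addrK.
by rewrite addrNK.
Qed.

Lemma muppN x y w : mupp x y w -> mlow (- x) (- y) (- w).
Proof.
case=> hxw [hyw hmin]; split; first exact: (ordN sle_order hxw).
split; first exact: (ordN le_order hyw).
move=> u hux huy; rewrite -[u]opprK; apply: (ordN le_order); apply: hmin.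
  by rewrite -[x]opprK; apply: (ordN sle_order).
by rewrite -[y]opprK; apply: (ordN le_order).
Qed.

Lemma mlow_mupp x y w : mlow x y w -> mupp 0 (x - y) (x - w).
Proof.
case=> hwx [hwy hmax]; split; first exact/(ord_subr_ge0 sle_order).
split; first exact: (ordBl le_order x hwy).
move=> u hu0 hyu; have := ordBl le_order x (hmax (x - u) _ _); rewrite subKr; apply.
  by have := ordBl sle_order x hu0; rewrite subr0.
by have := ordBl le_order x hyu; rewrite subKr.
Qed.

Hypothesis Hq : quasi_regular le sle.

Lemma sle_le x y : sle x y -> le x y.
Proof.
move/(ord_subr_ge0 sle_order) => hxy; have [w hw] := mlow_exists 0 (y - x).
have hw0 : sle 0 w := Hq.1 _ _ _ (ord_refl sle_order 0) hxy hw.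
case: hw => hw [hwxy _]; have w0 : w = 0 := ord_anti sle_order hw hw0.
by apply/(ord_subr_ge0 le_order); rewrite -w0.
Qed.

(* Translating by g - a turns a ⋏ b into g ⋏ (b + g - a), a mixed lower
   envelope of two ⪯-positive vectors. *)
Lemma mlow_subl_sle a b p g : mlow a b p -> sle 0 g -> sle (a - b) g -> sle (a - p) g.
Proof.
move=> /(mlowDr (g - a)) hp hg hab; rewrite [a + _]addrC addrNK in hp.
have hb : sle 0 (b + (g - a)).
  by move/(ord_subr_ge0 sle_order): hab; rewrite opprB addrCA.
have := Hq.1 _ _ _ hg hb hp.
by move=> hpg; apply/(ord_subr_ge0 sle_order); rewrite opprB addrCA.
Qed.

Lemma mupp_subl_sle x y w g : mupp x y w -> sle 0 g -> sle (y - x) g -> sle (w - x) g.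
Proof.
move=> /muppN hw hg hyx; have := mlow_subl_sle hw hg.
by rewrite !opprK ![- x + _]addrC; apply.
Qed.

Lemma mlow_subr_sle a b p q : mlow a b p -> sle b (a + q) -> sle 0 q -> sle (b - p) q.
Proof.
move=> hp hb hq.
have hg : sle 0 (a + q - b) by apply/(ord_subr_ge0 sle_order).
have hab : sle (a - b) (a + q - b).
  by have := ordDr sle_order (a - b) hq; rewrite add0r addrCA addrA.
move/(ord_subr_ge0 sle_order): (mlow_subl_sle hp hg hab) => h.
apply/(ord_subr_ge0 sle_order); move: h.
by rewrite !opprB addrC addrA addrA addrNK [p + q]addrC -addrA.
Qed.

Variable A : V -> Prop.
Local Notation G := (left_disj_gen le sle A).

Lemma left_disj_genI x :
  sle 0 x -> (forall z w, A z -> le 0 z -> sle w x -> le w z -> le w 0) -> G x.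
Proof. by move=> hx hmax; split=> // z hz hz0; split=> //; split=> // w; apply: hmax. Qed.

Lemma left_disj_gen_le0 x z w : G x -> A z -> le 0 z -> sle w x -> le w z -> le w 0.
Proof. by move=> [_ hx] hz hz0; case: (hx z hz hz0) => _ [_]; apply. Qed.

Lemma left_disj_gen_mlowI t :
  sle 0 t -> (forall z m, A z -> le 0 z -> mlow t z m -> le m 0) -> G t.
Proof.
move=> ht hm; apply: left_disj_genI => // z w hz hz0 hwt hwz.
have [m hmlow] := mlow_exists t z.
exact: (ord_trans le_order (hmlow.2.2 _ hwt hwz) (hm _ _ hz hz0 hmlow)).
Qed.

Lemma left_disj_gen0 : G 0.
Proof.
apply: left_disj_gen_mlowI => [|z m _ _ [hm0 _]]; first exact: (ord_refl sle_order 0).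
exact: sle_le.
Qed.

Lemma left_disj_gen_sle y x : sle 0 y -> sle y x -> G x -> G y.
Proof.
move=> hy hyx hx; apply: left_disj_genI => // z w hz hz0 hwy.
exact: (left_disj_gen_le0 hx hz hz0 (ord_trans sle_order hwy hyx)).
Qed.

(* With p = c ⋏ m one has p = 0 because c is in G, and the estimate for the
   mixed lower envelope bounds m - p. *)
Lemma left_disj_gen_mlow_sle c t z m :
  G c -> sle c t -> A z -> le 0 z -> mlow t z m -> sle m (t - c).
Proof.
move=> hc hct hz hz0 [hmt [hmz hmax]].
have hm0 : le 0 m := hmax 0 (ord_trans sle_order hc.1 hct) hz0.
have [p hp] := mlow_exists c m.
have p0 : p = 0.
  apply: (ord_anti le_order _ (hp.2.2 0 hc.1 hm0)).
  case: hp => hpc [hpm _].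
  exact: (left_disj_gen_le0 hc hz hz0 hpc (ord_trans le_order hpm hmz)).
have htc : sle 0 (t - c) by apply/(ord_subr_ge0 sle_order).
have hmct : sle m (c + (t - c)) by rewrite addrC addrNK.
by have := mlow_subr_sle hp hmct htc; rewrite p0 subr0.
Qed.

(* Both e and y - m are mixed upper envelopes with 0, of e - z and of y - z. *)
Lemma left_disj_gen_le_mlow e y z m :
  G e -> le e y -> A z -> le 0 z -> mlow y z m -> le e (y - m).
Proof.
move=> he hey hz hz0 hm.
have [_ [_ hmin]] := mlow_mupp (he.2 z hz hz0); rewrite subr0 in hmin.
have [hym [hzym _]] := mlow_mupp hm.
apply: (hmin _ hym); apply: (ord_trans le_order _ hzym).
exact: (ordDr le_order (- z) hey).
Qed.

Lemma left_disj_genD x y : G x -> G y -> G (x + y).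
Proof.
move=> hx hy; have hxy := ord_addr_ge0 sle_order hx.1 hy.1.
apply: left_disj_gen_mlowI => // z m hz hz0 hm.
have hx_xy : sle x (x + y) by have := ordDr sle_order x hy.1; rewrite add0r addrC.
have := left_disj_gen_mlow_sle hx hx_xy hz hz0 hm.
rewrite [x + y]addrC addrK => hmy.
exact: (left_disj_gen_le0 hy hz hz0 hmy hm.2.1).
Qed.

Lemma left_disj_gen_sup C t :
  (forall x, C x -> G x) -> (exists x, C x) -> is_sup sle C t -> G t.
Proof.
move=> hCG [c0 hc0] [hub hleast].
have ht : sle 0 t := ord_trans sle_order (hCG _ hc0).1 (hub _ hc0).
apply: left_disj_gen_mlowI => // z m hz hz0 hm.
have htm : sle t (t - m).
  apply: hleast => c hc.
  have := ordBl sle_order t (left_disj_gen_mlow_sle (hCG _ hc) (hub _ hc) hz hz0 hm).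
  by rewrite subKr.
by move/(ordBl sle_order t): htm; rewrite subKr subrr; apply: sle_le.
Qed.

Local Notation B := (cone_diff G).

Lemma left_disj_diff_bound x : B x -> exists2 g, G g & sle x g.
Proof.
case=> [u [v [hu hv ->]]]; exists u => //.
by have := ordBl sle_order u hv.1; rewrite subr0.
Qed.

Lemma left_disj_diff_sle d b : B b -> sle 0 d -> sle d b -> G d.
Proof.
case/left_disj_diff_bound => g hg hbg hd hdb.
exact: (left_disj_gen_sle hd (ord_trans sle_order hdb hbg) hg).
Qed.

Lemma left_disj_diff_envelope_closed : envelope_closed le sle B.
Proof.
have Bgen := cone_diff_of left_disj_gen0.
have BD := cone_diffD left_disj_genD; have BB := cone_diffB left_disj_genD.
split=> x y w hx hy hw.
- have [g hg hxyg] := left_disj_diff_bound (BB _ _ hx hy).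
  have hxw : sle 0 (x - w) by apply/(ord_subr_ge0 sle_order); case: hw.
  have Gxw := left_disj_gen_sle hxw (mlow_subl_sle hw hg.1 hxyg) hg.
  by rewrite -(subKr x w); apply: (BB _ _ hx (Bgen _ Gxw)).
- have [g hg hyxg] := left_disj_diff_bound (BB _ _ hy hx).
  have hwx : sle 0 (w - x) by apply/(ord_subr_ge0 sle_order); case: hw.
  have Gwx := left_disj_gen_sle hwx (mupp_subl_sle hw hg.1 hyxg) hg.
  by rewrite -(addrNK x w); apply: (BD _ _ (Bgen _ Gwx) hx).
Qed.

Lemma left_disj_diff_sle_convex : order_convex sle B.
Proof.
move=> x y z hx hy hxz hzy.
have hzx : sle 0 (z - x) by apply/(ord_subr_ge0 sle_order).
have Gzx := left_disj_diff_sle (cone_diffB left_disj_genD hy hx) hzx (ordDr sle_order (- x) hzy).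
by rewrite -(addrNK x z); apply: (cone_diffD left_disj_genD (cone_diff_of left_disj_gen0 Gzx) hx).
Qed.

Lemma left_disj_diff_sle_closed : order_closed sle B.
Proof.
apply: (order_closed_from_sup sle_order (@cone_diffN _ _ _)).
move=> C s hCB [c0 hc0] hdir hs.
have Gsc0 : G (s - c0).
  apply: (left_disj_gen_sup _ _ (is_sup_shift_tail sle_order hc0 hdir hs)).
    move=> _ [c [hc hc0c ->]]; apply: (left_disj_diff_sle _ _ (ord_refl sle_order _)).
      exact: (cone_diffB left_disj_genD (hCB _ hc) (hCB _ hc0)).
    exact/(ord_subr_ge0 sle_order).
  by exists 0, c0; rewrite subrr; split=> //; exact: (ord_refl sle_order c0).
rewrite -(addrNK c0 s).
exact: (cone_diffD left_disj_genD (cone_diff_of left_disj_gen0 Gsc0) (hCB _ hc0)).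
Qed.

Lemma left_disj_gen_mupp_sup C s y :
  (forall x, C x -> B x) -> is_sup le C s -> mupp 0 s y -> G y.
Proof.
move=> hCB [hub hleast] [hy0 [hsy hmin]].
apply: left_disj_gen_mlowI => // z m hz hz0 hm.
have hsym : le s (y - m).
  apply: hleast => c hc; have [e he] := mupp_exists 0 c.
  have Be := left_disj_diff_envelope_closed.2 _ _ _
    (cone_diff_of left_disj_gen0 left_disj_gen0) (hCB _ hc) he.
  have Ge : G e := left_disj_diff_sle Be he.1 (ord_refl sle_order e).
  have hey : le e y := he.2.2 _ hy0 (ord_trans le_order (hub _ hc) hsy).
  exact: (ord_trans le_order he.2.1 (left_disj_gen_le_mlow Ge hey hz hz0 hm)).
by move/(ordBl le_order y): (hmin _ (mlow_mupp hm).1 hsym); rewrite subKr subrr.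
Qed.

Lemma left_disj_diff_le_closed : order_convex le B -> order_closed le B.
Proof.
move=> hconv; apply: (order_closed_from_sup le_order (@cone_diffN _ _ _)).
move=> C s hCB [c0 hc0] _ hs; have [y hy] := mupp_exists 0 s.
have Gy := left_disj_gen_mupp_sup hCB hs hy.
exact: (hconv _ _ _ (hCB _ hc0) (cone_diff_of left_disj_gen0 Gy) (hs.1 _ hc0) hy.2.1).
Qed.

Hypothesis A_scale : forall (a : R) z, A z -> A (a *: z).

Lemma left_disj_genZ a x : 0 <= a -> G x -> G (a *: x).
Proof.
move=> ha hx; have [->|a0] := eqVneq a 0; first by rewrite scale0r; exact: left_disj_gen0.
have hai : 0 <= a^-1 by rewrite invr_ge0.
apply: left_disj_genI => [|z w hz hz0 hw hwz].
  by rewrite -(scaler0 _ a); apply: (ordZ sle_order ha hx.1).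
have hw' : sle (a^-1 *: w) x.
  by have := ordZ sle_order hai hw; rewrite scalerA mulVf // scale1r.
have hz0' : le 0 (a^-1 *: z) by rewrite -(scaler0 _ a^-1); apply: (ordZ le_order hai hz0).
have := ordZ le_order ha (left_disj_gen_le0 hx (A_scale _ hz) hz0' hw' (ordZ le_order hai hwz)).
by rewrite scalerA mulfV // scale1r scaler0.
Qed.

Lemma left_disj_diff_subspace : linear_subspace B.
Proof. exact: (cone_diff_subspace left_disj_gen0 left_disj_genD left_disj_genZ). Qed.

Lemma left_disj_diff_specific_ideal : specific_ideal le sle B.
Proof.
split; last exact: left_disj_diff_sle_convex.
by split; [exact: left_disj_diff_subspace | exact: left_disj_diff_envelope_closed].
Qed.

Lemma left_disj_compl_diff : left_disj_compl le sle A = B.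
Proof.
apply: funext => x; apply: propext; split.
  by apply; [exact: left_disj_diff_specific_ideal | exact: (cone_diff_of left_disj_gen0)].
by move=> hx I [[hI _] _] hgen; exact: (cone_diff_min hI hgen hx).
Qed.

Lemma left_disj_diff_regular : regular_subspace le sle B.
Proof.
split; first exact: left_disj_diff_specific_ideal.1.
move=> _ [u [v [hu hv ->]]]; exists u, v.
have Bgen := cone_diff_of left_disj_gen0.
by split; [exact: Bgen hu | exact: hu.1 | exact: Bgen hv | exact: hv.1 |].
Qed.

End LeftDisjointComplement.

Theorem theorem5p5 (R : realType) (V : lmodType R) (le sle : V -> V -> Prop)
  (HV : mixed_lattice_vs le sle) (Hq : quasi_regular le sle)
  (A : V -> Prop) (HA : mixed_lattice_subspace le sle A) :
  (regular_subspace le sle (left_disj_compl le sle A) /\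
   specific_band le sle (left_disj_compl le sle A)) /\
  (ideal le sle (left_disj_compl le sle A) ->
   regular_subspace le sle (left_disj_compl le sle A) /\
   band le sle (left_disj_compl le sle A)).
Proof.
have A_scale : forall (a : R) z, A z -> A (a *: z) by case: HA => [[_ _ AZ] _].
rewrite (left_disj_compl_diff HV Hq A_scale).
have regular := left_disj_diff_regular HV Hq A_scale.
have specific := left_disj_diff_specific_ideal HV Hq A_scale.
split; first by split=> //; split; last exact: (left_disj_diff_sle_closed HV Hq A).
move=> hideal; split=> //; split=> //.
exact: (left_disj_diff_le_closed HV Hq hideal.2).
Qed.
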